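(* Let $X,Y$ be metric spaces, $U\subset X$, $V\subset Y$ open sets, and $F:X\rightrightarrows Y$ a set-valued mapping whose graph is complete in the product metric. Let $r>0$ and suppose there is $\xi>0$ such that for every $x\in U$, $y\in V$, $v\in F(x)$ with $0<d(y,v)<r\,m(x)$ there is $(u,w)\in\operatorname{gr}F$, $(u,w)\ne(x,v)$, with $$d(y,w)\le d(y,v)-r\,d_\xi\big((x,v),(u,w)\big).$$ Then $F$ is Milyutin regular on $U\times V$ and $\operatorname{sur}_m F(U|V)\ge r$. Conversely, if $F$ is Milyutin regular on $U\times V$, then for every $r$ with $0<r<\operatorname{sur}_mF(U|V)$, every $\xi\in(0,r^{-1})$ and every $x\in U$, $v\in F(x)$, $y\in V$ with $0<d(y,v)<r\,m(x)$, there is $(u,w)\in\operatorname{gr}F$, $(u,w)\neq(x,v)$, satisfying the displayed inequality.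
   Context: $m(x)=d(x,X\setminus U)$ (with $d(x,\emptyset)=+\infty$). $d_\xi((x,v),(x',v'))=\max\{d(x,x'),\xi d(v,v')\}$. $B(A,s)=\{y:\exists a\in A,\ d(y,a)\le s\}$, $B(x,t)$ the closed ball. $F$ is Milyutin regular on $U\times V$ if there is $r>0$ with $B(F(x),rt)\cap V\subset F(B(x,t))$ for all $x\in U$, $0\le t<m(x)$; $\operatorname{sur}_mF(U|V)$ is the supremum of such $r$ ($0$ if none). *)

From Stdlib Require Import Reals.
Open Scope R_scope.

Record MetricSpace := {
  carrier :> Type;
  mdist : carrier -> carrier -> R;
  dist_nonneg : forall x y, 0 <= mdist x y;
  dist_eq0 : forall x y, mdist x y = 0 <-> x = y;
  dist_sym : forall x y, mdist x y = mdist y x;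
  dist_tri : forall x y z, mdist x z <= mdist x y + mdist y z
}.
Arguments mdist {_} _ _.

Definition is_open {X : MetricSpace} (U : X -> Prop) : Prop :=
  forall x, U x -> exists eps, 0 < eps /\ forall y, mdist x y < eps -> U y.

(* t < m(x), where m(x) = d(x, X \ U) = inf_{z notin U} d(x,z), inf of empty = +oo *)
Definition lt_m {X : MetricSpace} (U : X -> Prop) (x : X) (t : R) : Prop :=
  exists s, t < s /\ forall z, ~ U z -> s <= mdist x z.

(* t < r * m(x)  (with r*(+oo) = +oo for r > 0) *)
Definition lt_rm {X : MetricSpace} (U : X -> Prop) (r : R) (x : X) (t : R) : Prop :=
  exists s, t < r * s /\ forall z, ~ U z -> s <= mdist x z.

(* set-valued map F : X ⇉ Y, encoded by its graph: F x y means y ∈ F(x) *)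
Definition setmap (X Y : MetricSpace) := X -> Y -> Prop.

Definition dprod {X Y : MetricSpace} (p q : X * Y) : R :=
  Rmax (mdist (fst p) (fst q)) (mdist (snd p) (snd q)).

Definition dxi {X Y : MetricSpace} (xi : R) (p q : X * Y) : R :=
  Rmax (mdist (fst p) (fst q)) (xi * mdist (snd p) (snd q)).

Definition graph_complete {X Y : MetricSpace} (F : setmap X Y) : Prop :=
  forall s : nat -> X * Y,
    (forall n, F (fst (s n)) (snd (s n))) ->
    (forall eps, 0 < eps -> exists N, forall n m, (N <= n)%nat -> (N <= m)%nat ->
        dprod (s n) (s m) < eps) ->
    exists p : X * Y, F (fst p) (snd p) /\
      (forall eps, 0 < eps -> exists N, forall n, (N <= n)%nat -> dprod (s n) p < eps).

(* B(F(x), r t) ∩ V ⊆ F(B(x,t)) for all x ∈ U, 0 <= t < m(x) *)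
Definition milyutin_mod {X Y : MetricSpace} (F : setmap X Y)
    (U : X -> Prop) (V : Y -> Prop) (r : R) : Prop :=
  forall x, U x -> forall t, 0 <= t -> lt_m U x t ->
    forall y, V y -> (exists v, F x v /\ mdist y v <= r * t) ->
      exists u, mdist u x <= t /\ F u y.

Definition milyutin_regular {X Y : MetricSpace} (F : setmap X Y)
    (U : X -> Prop) (V : Y -> Prop) : Prop :=
  exists r, 0 < r /\ milyutin_mod F U V r.

(* sur_m F (U|V) = sup { r > 0 | milyutin_mod r } (0 if empty, possibly +oo). *)
Definition sur_m_ge {X Y : MetricSpace} (F : setmap X Y)
    (U : X -> Prop) (V : Y -> Prop) (r : R) : Prop :=
  (r <= 0) \/ (forall r', r' < r -> exists s, 0 < s /\ milyutin_mod F U V s /\ r' < s).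

Definition sur_m_gt {X Y : MetricSpace} (F : setmap X Y)
    (U : X -> Prop) (V : Y -> Prop) (r : R) : Prop :=
  (r < 0) \/ (exists s, 0 < s /\ milyutin_mod F U V s /\ r < s).

From Pilot Require Import Defs.
From Stdlib Require Import Reals Lra Lia Classical ClassicalEpsilon.
(* Re-imported so that [dist_sym] and [dist_tri] name the metric-space axioms rather
   than the homonymous lemmas of Stdlib's [Reals]. *)
Import Pilot.Defs.
Open Scope R_scope.

(* Sufficiency is Ekeland's variational principle, applied to (u, w) |-> d(y, w) on the
   graph of F, which is complete for the metric d_xi (equivalent to the product metric).
   Starting from (x, v) with d(y, v) <= r t, the Ekeland point (u, w) satisfies
   r d(x, u) <= d(y, v), so u stays within t of x (hence in U), and no point of the
   graph decreases d(y, .) at rate r in d_xi; by the descent hypothesis this forces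
   w = y.  Necessity applies Milyutin regularity with a modulus s > r at radius
   t = d(y, v) / s: the resulting (u, y) satisfies the inequality because r < s and
   r xi < 1. *)

Definition cauchy {T : Type} (D : T -> T -> R) (s : nat -> T) : Prop :=
  forall eps, 0 < eps -> exists N, forall n m, (N <= n)%nat -> (N <= m)%nat ->
    D (s n) (s m) < eps.

Definition converges {T : Type} (D : T -> T -> R) (s : nat -> T) (p : T) : Prop :=
  forall eps, 0 < eps -> exists N, forall n, (N <= n)%nat -> D (s n) p < eps.

Definition complete_in {T : Type} (D : T -> T -> R) (P : T -> Prop) : Prop :=
  forall s, (forall n, P (s n)) -> cauchy D s -> exists p, P p /\ converges D s p.

Section DominatedDistances.
Variables (T : Type) (D1 D2 : T -> T -> R) (c : R).
Hypotheses (c_pos : 0 < c) (D2_le : forall p q, D2 p q <= c * D1 p q).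

Lemma cauchy_dominated (s : nat -> T) : cauchy D1 s -> cauchy D2 s.
Proof.
  intros Hs eps Heps.
  destruct (Hs (eps / c)) as [N HN]; [apply Rdiv_lt_0_compat; lra|].
  exists N; intros n m Hn Hm.
  specialize (HN n m Hn Hm); specialize (D2_le (s n) (s m)).
  apply (Rmult_lt_compat_l c) in HN; [|lra].
  replace (c * (eps / c)) with eps in HN by (field; lra); lra.
Qed.

Lemma converges_dominated (s : nat -> T) (p : T) : converges D1 s p -> converges D2 s p.
Proof.
  intros Hs eps Heps.
  destruct (Hs (eps / c)) as [N HN]; [apply Rdiv_lt_0_compat; lra|].
  exists N; intros n Hn.
  specialize (HN n Hn); specialize (D2_le (s n) p).
  apply (Rmult_lt_compat_l c) in HN; [|lra].
  replace (c * (eps / c)) with eps in HN by (field; lra); lra.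
Qed.

End DominatedDistances.

Lemma complete_in_equiv {T : Type} (D1 D2 : T -> T -> R) (c1 c2 : R) (P : T -> Prop) :
  0 < c1 -> 0 < c2 ->
  (forall p q, D2 p q <= c1 * D1 p q) -> (forall p q, D1 p q <= c2 * D2 p q) ->
  complete_in D1 P -> complete_in D2 P.
Proof.
  intros c1_pos c2_pos D21 D12 HP s Ps Hs.
  destruct (HP s Ps (cauchy_dominated _ _ _ _ c2_pos D12 s Hs)) as [p [Pp Hp]].
  exists p; split; [exact Pp | exact (converges_dominated _ _ _ _ c1_pos D21 s p Hp)].
Qed.

Section XiMetric.
Variables (X Y : MetricSpace) (xi : R).
Hypothesis xi_pos : 0 < xi.

Lemma dxi_nonneg (p q : X * Y) : 0 <= dxi xi p q.
Proof.
  unfold dxi; pose proof (dist_nonneg _ (fst p) (fst q)).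
  pose proof (Rmax_l (mdist (fst p) (fst q)) (xi * mdist (snd p) (snd q))); lra.
Qed.

Lemma dxi_eq0 (p q : X * Y) : dxi xi p q = 0 <-> p = q.
Proof.
  destruct p as [a b], q as [c d]; unfold dxi; simpl; split.
  - intro H0.
    pose proof (Rmax_l (mdist a c) (xi * mdist b d)).
    pose proof (Rmax_r (mdist a c) (xi * mdist b d)).
    pose proof (dist_nonneg _ a c); pose proof (dist_nonneg _ b d).
    assert (Eac : mdist a c = 0) by lra.
    assert (Ebd : mdist b d = 0) by nra.
    apply dist_eq0 in Eac; apply dist_eq0 in Ebd; subst; reflexivity.
  - intros [= <- <-].
    rewrite (proj2 (dist_eq0 _ a a) eq_refl), (proj2 (dist_eq0 _ b b) eq_refl).
    rewrite Rmult_0_r; apply Rmax_left; lra.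
Qed.

Lemma dxi_sym (p q : X * Y) : dxi xi p q = dxi xi q p.
Proof. unfold dxi; rewrite (dist_sym _ (fst p)), (dist_sym _ (snd p)); reflexivity. Qed.

Lemma dxi_tri (p q z : X * Y) : dxi xi p z <= dxi xi p q + dxi xi q z.
Proof.
  unfold dxi.
  pose proof (dist_tri _ (fst p) (fst q) (fst z)).
  pose proof (dist_tri _ (snd p) (snd q) (snd z)).
  pose proof (Rmax_l (mdist (fst p) (fst q)) (xi * mdist (snd p) (snd q))).
  pose proof (Rmax_r (mdist (fst p) (fst q)) (xi * mdist (snd p) (snd q))).
  pose proof (Rmax_l (mdist (fst q) (fst z)) (xi * mdist (snd q) (snd z))).
  pose proof (Rmax_r (mdist (fst q) (fst z)) (xi * mdist (snd q) (snd z))).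
  apply Rmax_lub; nra.
Qed.

Definition xi_prod : MetricSpace :=
  {| carrier := X * Y; mdist := dxi xi;
     dist_nonneg := dxi_nonneg; dist_eq0 := dxi_eq0;
     dist_sym := dxi_sym; dist_tri := dxi_tri |}.

Lemma fst_dist_le_dxi (p q : X * Y) : mdist (fst p) (fst q) <= dxi xi p q.
Proof. apply Rmax_l. Qed.

Lemma snd_dist_le_dxi (p q : X * Y) : mdist (snd p) (snd q) <= / xi * dxi xi p q.
Proof.
  unfold dxi; pose proof (Rmax_r (mdist (fst p) (fst q)) (xi * mdist (snd p) (snd q))).
  apply (Rmult_le_compat_l (/ xi)) in H; [|left; apply Rinv_0_lt_compat; lra].
  replace (/ xi * (xi * mdist (snd p) (snd q))) with (mdist (snd p) (snd q)) in H
    by (field; lra); exact H.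
Qed.

Lemma dxi_le_scale (xi' : R) (p q : X * Y) : 0 < xi' ->
  dxi xi p q <= (1 + xi / xi') * dxi xi' p q.
Proof.
  intro xi'_pos; unfold dxi.
  set (a := mdist (fst p) (fst q)); set (b := mdist (snd p) (snd q)).
  assert (a_nn : 0 <= a) by apply dist_nonneg.
  assert (b_nn : 0 <= b) by apply dist_nonneg.
  pose proof (Rmax_l a (xi' * b)); pose proof (Rmax_r a (xi' * b)).
  assert (k_nn : 0 <= xi / xi') by (left; apply Rdiv_lt_0_compat; lra).
  assert (xi * b = xi / xi' * (xi' * b)) by (field; lra).
  apply Rmax_lub; nra.
Qed.

End XiMetric.

Lemma dprod_dxi1 (X Y : MetricSpace) (p q : X * Y) : dprod p q = dxi 1 p q.
Proof. unfold dprod, dxi; rewrite Rmult_1_l; reflexivity. Qed.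

Lemma graph_complete_dxi (X Y : MetricSpace) (F : setmap X Y) (xi : R) :
  0 < xi -> graph_complete F -> complete_in (dxi xi) (fun p : X * Y => F (fst p) (snd p)).
Proof.
  intros xi_pos HF.
  apply (complete_in_equiv dprod _ (1 + xi / 1) (1 + 1 / xi)).
  - assert (0 < xi / 1) by (apply Rdiv_lt_0_compat; lra); lra.
  - assert (0 < 1 / xi) by (apply Rdiv_lt_0_compat; lra); lra.
  - intros p q; rewrite dprod_dxi1; apply dxi_le_scale; lra.
  - intros p q; rewrite dprod_dxi1; apply dxi_le_scale; lra.
  - exact HF.
Qed.

Definition seq_lsc {M : MetricSpace} (f : M -> R) : Prop :=
  forall s p, converges mdist s p ->
    forall eps, 0 < eps -> exists N, forall n, (N <= n)%nat -> f p <= f (s n) + eps.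

Lemma lipschitz_seq_lsc {M : MetricSpace} (f : M -> R) (L : R) :
  0 <= L -> (forall p q, f q <= f p + L * mdist p q) -> seq_lsc f.
Proof.
  intros L_nn f_lip s p Hs eps Heps.
  destruct (Hs (eps / (L + 1))) as [N HN]; [apply Rdiv_lt_0_compat; lra|].
  exists N; intros n Hn.
  specialize (HN n Hn); specialize (f_lip (s n) p).
  assert (L * mdist (s n) p <= (L + 1) * (eps / (L + 1))).
  { pose proof (dist_nonneg _ (s n) p).
    apply Rmult_le_compat; lra. }
  replace ((L + 1) * (eps / (L + 1))) with eps in H by (field; lra); lra.
Qed.

Fixpoint iter_seq {T : Type} (g : T -> nat -> T) (x0 : T) (n : nat) : T :=
  match n with O => x0 | S k => g (iter_seq g x0 k) k end.

Lemma inv_INR_S_lt (eps : R) : 0 < eps -> exists N, / INR (S N) < eps.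
Proof.
  intro Heps; destruct (archimed_cor1 eps Heps) as [N [HN N_pos]].
  exists (pred N); replace (S (pred N)) with N by lia; exact HN.
Qed.

Section Ekeland.
Variables (M : MetricSpace) (P : M -> Prop) (f : M -> R) (b r : R).
Hypotheses (P_complete : complete_in mdist P) (f_lsc : seq_lsc f)
  (f_ge : forall p, b <= f p) (r_pos : 0 < r).

Definition slice (z q : M) : Prop := P q /\ f q + r * mdist z q <= f z.

Lemma slice_refl (z : M) : P z -> slice z z.
Proof.
  intro Pz; split; [exact Pz|].
  rewrite (proj2 (dist_eq0 _ z z) eq_refl); lra.
Qed.

Lemma slice_trans (z q q' : M) : slice z q -> slice q q' -> slice z q'.
Proof.
  intros [_ Hzq] [Pq Hqq']; split; [exact Pq|].
  pose proof (dist_tri _ z q q'); nra.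
Qed.

Lemma slice_near_inf (z : M) (eps : R) : P z -> 0 < eps ->
  exists z', slice z z' /\ forall q, slice z' q -> f z' - eps <= f q.
Proof.
  intros Pz Heps.
  set (E := fun x => exists q, slice z q /\ x = - f q).
  assert (E_bound : bound E).
  { exists (- b); intros x [q [_ ->]]; specialize (f_ge q); lra. }
  assert (E_inh : exists x, E x) by (exists (- f z), z; split; [apply slice_refl|]; auto).
  destruct (completeness E E_bound E_inh) as [m [m_ub m_lub]].
  assert (exists q, slice z q /\ m - eps < - f q) as [z' [Hz' Hlt]].
  { apply NNPP; intro Hn.
    enough (m <= m - eps) by lra.
    apply m_lub; intros x [q [Hq ->]].
    apply Rnot_lt_le; intro Hl; apply Hn; exists q; auto. }
  exists z'; split; [exact Hz'|].
  intros q Hq.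
  assert (E (- f q)) by (exists q; split; [eapply slice_trans; eauto | reflexivity]).
  specialize (m_ub _ H); lra.
Qed.

(* Iterating [slice_near_inf] with tolerance [1/(n+1)] gives nested slices whose
   diameters shrink to zero. *)
Lemma ekeland_sequence (p0 : M) : P p0 ->
  exists s : nat -> M, s O = p0 /\ (forall n, slice (s n) (s (S n))) /\
    forall n q, slice (s (S n)) q -> r * mdist (s (S n)) q <= / INR (S n).
Proof.
  intro Pp0.
  assert (exists g : M -> nat -> M, forall z n, P z -> slice z (g z n) /\
            forall q, slice (g z n) q -> f (g z n) - / INR (S n) <= f q) as [g Hg].
  { apply (choice (fun z (g : nat -> M) => forall n, P z -> slice z (g n) /\
             forall q, slice (g n) q -> f (g n) - / INR (S n) <= f q)); intro z.
    apply (choice (fun n z' => P z -> slice z z' /\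
             forall q, slice z' q -> f z' - / INR (S n) <= f q)); intro n.
    destruct (classic (P z)) as [Pz|nPz]; [|exists z; contradiction].
    assert (0 < / INR (S n)) by (apply Rinv_0_lt_compat, lt_0_INR; lia).
    destruct (slice_near_inf z _ Pz H) as [z' Hz']; exists z'; auto. }
  set (s := iter_seq g p0).
  assert (Ps : forall n, P (s n)).
  { induction n; [exact Pp0|]. apply (Hg _ n IHn). }
  exists s; split; [reflexivity|]; split; [intro n; apply (Hg _ n (Ps n))|].
  intros n q Hq; change (s (S n)) with (g (s n) n) in *.
  destruct (Hg (s n) n (Ps n)) as [_ Hinf].
  specialize (Hinf q Hq); destruct Hq as [_ Hq]; lra.
Qed.

Theorem ekeland (p0 : M) : P p0 ->
  exists pb, P pb /\ f pb + r * mdist p0 pb <= f p0 /\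
    forall q, P q -> f q + r * mdist pb q <= f pb -> q = pb.
Proof.
  intro Pp0.
  destruct (ekeland_sequence p0 Pp0) as [s [s0 [s_step s_diam]]].
  assert (s_in : forall n, P (s n)).
  { intros [|n]; [rewrite s0; exact Pp0 | apply (proj1 (s_step n))]. }
  assert (s_nested : forall n k, slice (s n) (s (k + n)%nat)).
  { intros n k; induction k as [|k IHk].
    - apply slice_refl, s_in.
    - eapply slice_trans; [exact IHk | apply s_step]. }
  assert (s_close : forall N q q', slice (s (S N)) q -> slice (s (S N)) q' ->
            r * mdist q q' <= 2 * / INR (S N)).
  { intros N q q' Hq Hq'.
    pose proof (s_diam N q Hq); pose proof (s_diam N q' Hq').
    pose proof (dist_tri _ q (s (S N)) q'); rewrite (dist_sym _ q (s (S N))) in H1.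
    apply (Rmult_le_compat_l r) in H1; lra. }
  assert (s_cauchy : cauchy mdist s).
  { intros eps Heps.
    destruct (inv_INR_S_lt (r * eps / 2)) as [N HN].
    { apply Rdiv_lt_0_compat; [apply Rmult_lt_0_compat|]; lra. }
    exists (S N); intros n m Hn Hm.
    pose proof (s_close N _ _ (s_nested (S N) (n - S N)%nat) (s_nested (S N) (m - S N)%nat)).
    replace (n - S N + S N)%nat with n in H by lia.
    replace (m - S N + S N)%nat with m in H by lia.
    nra. }
  destruct (P_complete s s_in s_cauchy) as [pb [Ppb s_lim]].
  assert (pb_in : forall n, slice (s n) pb).
  { intro n; split; [exact Ppb|].
    apply Rle_plus_epsilon; intros eps Heps.
    destruct (f_lsc s pb s_lim (eps / 2)) as [N1 HN1]; [lra|].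
    destruct (s_lim (eps / (2 * r))) as [N2 HN2]; [apply Rdiv_lt_0_compat; lra|].
    set (k := (N1 + N2 + n)%nat).
    specialize (HN1 k ltac:(unfold k; lia)); specialize (HN2 k ltac:(unfold k; lia)).
    destruct (s_nested n (N1 + N2)%nat) as [_ Hk]; fold k in Hk.
    pose proof (dist_tri _ (s n) (s k) pb).
    assert (r * mdist (s k) pb <= eps / 2).
    { apply (Rmult_lt_compat_l r) in HN2; [|lra].
      replace (r * (eps / (2 * r))) with (eps / 2) in HN2 by (field; lra); lra. }
    nra. }
  exists pb; split; [exact Ppb|]; split.
  - rewrite <- s0; apply (pb_in O).
  - intros q Pq Hq.
    assert (Sq : slice pb q) by (split; assumption).
    apply eq_sym, (proj1 (dist_eq0 _ pb q)), Rle_antisym; [|apply dist_nonneg].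
    apply Rnot_lt_le; intro Hl.
    destruct (inv_INR_S_lt (r * mdist pb q / 2)) as [N HN].
    { apply Rdiv_lt_0_compat; [apply Rmult_lt_0_compat|]; lra. }
    pose proof (s_close N _ _ (pb_in (S N)) (slice_trans _ _ _ (pb_in (S N)) Sq)).
    lra.
Qed.

End Ekeland.

Section DistanceToComplement.
Variables (X : MetricSpace) (U : X -> Prop).

Lemma lt_m_mem (x u : X) (t : R) : lt_m U x t -> mdist x u <= t -> U u.
Proof.
  intros [s [ts Hs]] Hxu; apply NNPP; intro nUu; specialize (Hs u nUu); lra.
Qed.

Lemma lt_rm_move (r : R) (x u : X) (t e : R) : 0 < r -> lt_m U x t ->
  mdist x u <= t -> e <= r * (t - mdist x u) -> lt_rm U r u e.
Proof.
  intros r_pos [s [ts Hs]] Hxu He; exists (s - mdist x u); split.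
  - apply (Rmult_lt_compat_l r) in ts; lra.
  - intros z nUz; specialize (Hs z nUz); pose proof (dist_tri _ x u z); lra.
Qed.

Lemma lt_m_of_lt_rm (r : R) (x : X) (t e : R) : 0 < r -> r * t <= e ->
  lt_rm U r x e -> lt_m U x t.
Proof.
  intros r_pos Hte [s [es Hs]]; exists s; split; [|exact Hs].
  apply (Rmult_lt_reg_l r); lra.
Qed.

End DistanceToComplement.

Definition descent_property {X Y : MetricSpace} (F : setmap X Y)
    (U : X -> Prop) (V : Y -> Prop) (r xi : R) : Prop :=
  forall x y v, U x -> V y -> F x v -> 0 < mdist y v -> lt_rm U r x (mdist y v) ->
    exists u w, F u w /\ (u, w) <> (x, v) /\
      mdist y w <= mdist y v - r * dxi xi (x, v) (u, w).

Section Sufficiency.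
Variables (X Y : MetricSpace) (U : X -> Prop) (V : Y -> Prop) (F : setmap X Y) (r xi : R).
Hypotheses (F_complete : graph_complete F) (r_pos : 0 < r) (xi_pos : 0 < xi)
  (F_descent : descent_property F U V r xi).

Lemma milyutin_mod_of_descent : milyutin_mod F U V r.
Proof.
  intros x Ux t t_nn Htm y Vy [v [Fxv dyv]].
  set (gr := fun p : X * Y => F (fst p) (snd p)).
  set (f := fun p : X * Y => mdist y (snd p)).
  assert (f_lip : forall p q, f q <= f p + / xi * dxi xi p q).
  { intros p q; unfold f; pose proof (dist_tri _ y (snd p) (snd q)).
    pose proof (snd_dist_le_dxi X Y xi xi_pos p q); lra. }
  destruct (ekeland (xi_prod X Y xi xi_pos) gr f 0 r) with (p0 := (x, v))
    as [[u w] [Fuw [Hdecr Hstrict]]];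
    [ apply graph_complete_dxi; assumption
    | apply (lipschitz_seq_lsc _ (/ xi)); [left; apply Rinv_0_lt_compat|]; assumption
    | intro p; apply dist_nonneg | exact r_pos | exact Fxv | ].
  unfold f, gr in *; simpl in *.
  pose proof (fst_dist_le_dxi X Y xi (x, v) (u, w)) as Hxu; simpl in Hxu.
  assert (dyw_nn : 0 <= mdist y w) by apply dist_nonneg.
  assert (r_xu : r * mdist x u <= r * dxi xi (x, v) (u, w))
    by (apply Rmult_le_compat_l; lra).
  assert (xu_t : mdist x u <= t) by (apply (Rmult_le_reg_l r); lra).
  destruct (classic (mdist y w = 0)) as [Hyw|Hyw].
  - apply dist_eq0 in Hyw; subst w.
    exists u; split; [rewrite dist_sym|]; assumption.
  - exfalso.
    destruct (F_descent u y w) as [u' [w' [Fuw' [Hne Hdesc]]]];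
      [ exact (lt_m_mem _ _ _ _ _ Htm xu_t) | exact Vy | exact Fuw | lra
      | apply (lt_rm_move _ _ _ x _ t); auto; lra | ].
    apply Hne, (Hstrict (u', w')); simpl; [exact Fuw' | lra].
Qed.

End Sufficiency.

Lemma descent_of_milyutin_mod {X Y : MetricSpace} (F : setmap X Y)
    (U : X -> Prop) (V : Y -> Prop) (r s xi : R) :
  0 < r -> r < s -> milyutin_mod F U V s -> 0 < xi -> xi < / r ->
  descent_property F U V r xi.
Proof.
  intros r_pos rs Hmod xi_pos xi_r x y v Ux Vy Fxv dyv_pos Hrm.
  set (t := mdist y v / s).
  assert (st : s * t = mdist y v) by (unfold t; field; lra).
  assert (t_nn : 0 <= t) by (unfold t; left; apply Rdiv_lt_0_compat; lra).
  assert (rt : r * t <= mdist y v) by (rewrite <- st; apply Rmult_le_compat_r; lra).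
  destruct (Hmod x Ux t t_nn (lt_m_of_lt_rm _ _ r x t _ r_pos rt Hrm) y Vy)
    as [u [Hut Fuy]]; [exists v; split; [exact Fxv | lra]|].
  exists u, y; split; [exact Fuy|]; split.
  - intros [= -> <-]; rewrite (proj2 (dist_eq0 _ y y) eq_refl) in dyv_pos; lra.
  - rewrite (proj2 (dist_eq0 _ y y) eq_refl); unfold dxi; simpl.
    rewrite (dist_sym _ x u), (dist_sym _ v y).
    assert (xi_r1 : xi * r < 1).
    { apply (Rmult_lt_compat_r r) in xi_r; [|lra].
      rewrite Rinv_l in xi_r; lra. }
    pose proof (dist_nonneg _ y v).
    apply Rmax_case_strong; intros _; nra.
Qed.

Theorem mainTheorem2 (X Y : MetricSpace) (U : X -> Prop) (V : Y -> Prop)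
  (F : setmap X Y) (HU : is_open U) (HV : is_open V) (HF : graph_complete F) :
  (forall r, 0 < r ->
     (exists xi, 0 < xi /\
        forall x y v, U x -> V y -> F x v ->
          0 < mdist y v -> lt_rm U r x (mdist y v) ->
          exists u w, F u w /\ (u, w) <> (x, v) /\
            mdist y w <= mdist y v - r * dxi xi (x, v) (u, w)) ->
     milyutin_regular F U V /\ sur_m_ge F U V r)
  /\
  (milyutin_regular F U V ->
     forall r, 0 < r -> sur_m_gt F U V r ->
     forall xi, 0 < xi -> xi < / r ->
     forall x v y, U x -> F x v -> V y ->
       0 < mdist y v -> lt_rm U r x (mdist y v) ->
       exists u w, F u w /\ (u, w) <> (x, v) /\
         mdist y w <= mdist y v - r * dxi xi (x, v) (u, w)).
Proof.
  split.
  - intros r r_pos [xi [xi_pos Hdesc]].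
    pose proof (milyutin_mod_of_descent X Y U V F r xi HF r_pos xi_pos Hdesc) as Hmod.
    split; [exists r; split; assumption|].
    right; intros r' Hr'; exists r; auto.
  (* [sur_m_gt] with [r > 0] already provides a modulus [s > r]. *)
  - intros _ r r_pos [Hr | [s [_ [Hmod rs]]]] xi xi_pos xi_r x v y Ux Fxv Vy;
      [lra|].
    exact (descent_of_milyutin_mod F U V r s xi r_pos rs Hmod xi_pos xi_r x y v Ux Vy Fxv).
Qed.
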